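(* Suppose $f$ is $L_f$-smooth, $\mathbf{c}$ is $L_c$-smooth, and there exist $C,G>0$ such that for all $\mathbf{x}$: $\|\nabla f(\mathbf{x})\|\le G$, all subgradients of $h$ and $g$ have norm at most $G$, $\|\nabla\mathbf{c}(\mathbf{x})\|\le G$, $\|\mathbf{c}(\mathbf{x})\|\le C$. Then for any $k\ge0$, $\|\mathbf{u}^{k+1}\|^2\le3\|\mathbf{e}^k\|^2+3(L_{\rho_k}^2+(\mu_k\beta)^{-2})\|\mathbf{w}^{k+1}-\mathbf{w}^k\|^2$, and $\max\{\|\mathbf{u}^{k+1}\|^2,\|\mathbf{x}^{k+1}-\mathrm{prox}_{\mu_kg}(\mathbf{z}^k)\|^2\}\le3\|\mathbf{e}^k\|^2+\bigl(3(L_{\rho_k}^2+(\mu_k\beta)^{-2})+\beta^{-2}\bigr)\|\mathbf{w}^{k+1}-\mathbf{w}^k\|^2$.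
   Context: Problem: $\min f(\mathbf{x})+h(\mathbf{x})-g(\mathbf{x})$ s.t. $\mathbf{c}(\mathbf{x})=\mathbf{0}$, $f=\mathbb{E}_\xi[\mathbf{f}(\cdot,\xi)]$, $h,g$ proper closed convex. $Q_\rho(\mathbf{x})=f(\mathbf{x})+\frac{\rho}{2}\|\mathbf{c}(\mathbf{x})\|^2$, $L_\rho$-smooth with $L_\rho=\rho(\rho_0^{-1}L_f+G^2+CL_c)$. Iterates $\mathbf{w}^k=(\mathbf{x}^k,\mathbf{z}^k)$ of MoSSP-P or MoSSP-R: $\mathbf{x}^{k+1}=\mathrm{prox}_{\mu_kh}(\mathbf{z}^k-\mu_k\mathbf{G}^k)$, $\mathbf{z}^{k+1}=\mathbf{z}^k-\beta(\mathrm{prox}_{\mu_kg}(\mathbf{z}^k)-\mathbf{x}^{k+1})$, with $\mathbf{G}^k$ the Polyak-momentum estimator $\mathbf{S}^k$ or recursive-momentum estimator $\mathbf{D}^k$ of $\nabla Q_{\rho_k}(\mathbf{x}^k)$; $\mathbf{e}^k:=\mathbf{G}^k-\nabla Q_{\rho_k}(\mathbf{x}^k)$; $\mathbf{u}^{k+1}:=\nabla Q_{\rho_k}(\mathbf{x}^{k+1})-\mathbf{G}^k+\mu_k^{-1}(\mathrm{prox}_{\mu_kg}(\mathbf{z}^k)-\mathbf{x}^{k+1})$, which lies in $\partial(Q_{\rho_k}+h)(\mathbf{x}^{k+1})-\partial g(\mathrm{prox}_{\mu_kg}(\mathbf{z}^k))$. *)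

From HB Require Import structures.
From mathcomp Require Import all_boot all_order all_algebra.
From mathcomp Require Import all_classical all_reals all_analysis.
Set Implicit Arguments. Unset Strict Implicit. Unset Printing Implicit Defensive.
Import Order.TTheory GRing.Theory Num.Theory.
Import numFieldNormedType.Exports.
Local Open Scope ring_scope.

Section Defs.
Variables (R : realType).

Definition dot {n : nat} (u v : 'rV[R]_n) : R := \sum_(i < n) u 0 i * v 0 i.
Definition enorm {n : nat} (u : 'rV[R]_n) : R := Num.sqrt (dot u u).

Definition is_gradient {n : nat} (F : 'rV[R]_n -> R) (dF : 'rV[R]_n -> 'rV[R]_n) :=
  forall x, differentiable F x /\ forall v, 'd F x v = dot v (dF x).

(* J is the Jacobian (transposed, n x m : "nabla c") of c : R^n -> R^m :
   dc(x)[v] = v *m J x *)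
Definition is_jacobian {n m : nat} (c : 'rV[R]_n -> 'rV[R]_m)
  (J : 'rV[R]_n -> 'M[R]_(n, m)) :=
  forall x, differentiable c x /\ forall v, 'd c x v = v *m J x.

Definition opnorm_le {n m : nat} (A : 'M[R]_(n, m)) (b : R) :=
  forall v : 'rV[R]_n, enorm (v *m A) <= b * enorm v.

Definition smooth_fun {n : nat} (F : 'rV[R]_n -> R) (dF : 'rV[R]_n -> 'rV[R]_n) (L : R) :=
  is_gradient F dF /\ forall x y, enorm (dF x - dF y) <= L * enorm (x - y).

Definition smooth_map {n m : nat} (c : 'rV[R]_n -> 'rV[R]_m)
  (J : 'rV[R]_n -> 'M[R]_(n, m)) (L : R) :=
  is_jacobian c J /\ forall x y, opnorm_le (J x - J y) (L * enorm (x - y)).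

Definition convex_fun {n : nat} (h : 'rV[R]_n -> R) :=
  forall x y (t : R), 0 <= t <= 1 ->
    h (t *: x + (1 - t) *: y) <= t * h x + (1 - t) * h y.

Definition subgrad {n : nat} (h : 'rV[R]_n -> R) (x s : 'rV[R]_n) :=
  forall y, h x + dot s (y - x) <= h y.

Definition is_prox {n : nat} (mu : R) (h : 'rV[R]_n -> R) (y p : 'rV[R]_n) :=
  forall x, h p + (2 * mu)^-1 * enorm (p - y) ^+ 2
            <= h x + (2 * mu)^-1 * enorm (x - y) ^+ 2.

Definition Qpen {n m : nat} (f : 'rV[R]_n -> R) (c : 'rV[R]_n -> 'rV[R]_m)
  (rho : R) (x : 'rV[R]_n) : R := f x + rho / 2 * enorm (c x) ^+ 2.

Definition Lrho (Lf Lc G C rho0 rho : R) : R := rho * (rho0^-1 * Lf + G ^+ 2 + C * Lc).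

End Defs.

(* Write P := prox_{μ_k g}(z^k).  The residual splits as
     u = (∇Q(x^{k+1}) - ∇Q(x^k)) - e^k + μ_k^{-1} (P - x^{k+1}),
   and the z-update gives P - x^{k+1} = -β^{-1} (z^{k+1} - z^k).  The first term is
   at most L_ρ ‖x^{k+1} - x^k‖ because ∇Q_ρ = ∇f + ρ ∇c c is Lipschitz with constant
   L_f + ρ (G^2 + C L_c) ≤ L_ρ: split ∇c(a) c(a) - ∇c(b) c(b) as in the product rule,
   and use the mean value theorem to turn the Jacobian bound G into
   ‖c(a) - c(b)‖ ≤ G ‖a - b‖.  Conclude with (a + b + c)^2 ≤ 3 (a^2 + b^2 + c^2). *)

From HB Require Import structures.
From mathcomp Require Import all_boot all_order all_algebra.
From mathcomp Require Import all_classical all_reals all_analysis.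
From mathcomp Require Import ring lra.
Import Order.TTheory GRing.Theory Num.Theory.
Import numFieldNormedType.Exports.
Local Open Scope ring_scope.

Set Implicit Arguments. Unset Strict Implicit.

Section Euclidean.
Variables (R : realType) (n : nat).
Implicit Types (u v w : 'rV[R]_n) (k : R).

Lemma dotC u v : dot u v = dot v u.
Proof. by apply: eq_bigr => i _; rewrite mulrC. Qed.

Lemma dotDl u v w : dot (u + v) w = dot u w + dot v w.
Proof. by rewrite /dot -big_split; apply: eq_bigr => i _; rewrite mxE mulrDl. Qed.

Lemma dotZl k u w : dot (k *: u) w = k * dot u w.
Proof. by rewrite /dot mulr_sumr; apply: eq_bigr => i _; rewrite mxE mulrA. Qed.

Lemma dotNl u w : dot (- u) w = - dot u w.
Proof. by rewrite -scaleN1r dotZl mulN1r. Qed.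

Lemma dotBl u v w : dot (u - v) w = dot u w - dot v w.
Proof. by rewrite dotDl dotNl. Qed.

Lemma dotDr u v w : dot w (u + v) = dot w u + dot w v.
Proof. by rewrite !(dotC w) dotDl. Qed.

Lemma dotBr u v w : dot w (u - v) = dot w u - dot w v.
Proof. by rewrite !(dotC w) dotBl. Qed.

Lemma dotZr k u w : dot w (k *: u) = k * dot w u.
Proof. by rewrite !(dotC w) dotZl. Qed.

Lemma dot0l w : dot 0 w = 0.
Proof. by rewrite -(scale0r 0) dotZl mul0r. Qed.

Lemma dotxx_ge0 u : 0 <= dot u u.
Proof. by apply: sumr_ge0 => i _; rewrite -expr2 sqr_ge0. Qed.

Lemma dotxx_eq0 u : (dot u u == 0) = (u == 0).
Proof.
apply/idP/eqP => [|->]; last by rewrite dot0l.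
rewrite psumr_eq0 => [/allP u0|i _]; last by rewrite -expr2 sqr_ge0.
apply/rowP => i; have /implyP := u0 i (mem_index_enum _).
by rewrite mxE mulf_eq0 orbb => /(_ isT) /eqP.
Qed.

Lemma enorm_ge0 u : 0 <= enorm u.
Proof. exact: sqrtr_ge0. Qed.

Lemma enorm_gt0 u : (0 < enorm u) = (u != 0).
Proof. by rewrite sqrtr_gt0 lt_def dotxx_ge0 dotxx_eq0 andbT. Qed.

Lemma sqr_enorm u : enorm u ^+ 2 = dot u u.
Proof. by rewrite sqr_sqrtr // dotxx_ge0. Qed.

Lemma dot_le_enormM u v : dot u v <= enorm u * enorm v.
Proof.
have [->|u0] := eqVneq u 0; first by rewrite dot0l mulr_ge0 ?enorm_ge0.
have [->|v0] := eqVneq v 0; first by rewrite dotC dot0l mulr_ge0 ?enorm_ge0.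
have st_gt0 : 0 < enorm u * enorm v by rewrite mulr_gt0 ?enorm_gt0.
(* [0 <= |t u - s v|^2 = 2 s t (s t - dot u v)] for [s = |u|], [t = |v|] *)
have := dotxx_ge0 (enorm v *: u - enorm u *: v).
rewrite !(dotBl, dotBr, dotZl, dotZr) (dotC v u) -!sqr_enorm.
move: st_gt0; set s := enorm u; set t := enorm v; set d := dot u v; nra.
Qed.

Lemma enormZ k u : enorm (k *: u) = `|k| * enorm u.
Proof. by rewrite /enorm dotZl dotZr mulrA -expr2 sqrtrM ?sqr_ge0 // sqrtr_sqr. Qed.

Lemma enormN u : enorm (- u) = enorm u.
Proof. by rewrite -scaleN1r enormZ normrN1 mul1r. Qed.

Lemma enorm_distC u v : enorm (u - v) = enorm (v - u).
Proof. by rewrite -enormN opprB. Qed.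

Lemma enormD u v : enorm (u + v) <= enorm u + enorm v.
Proof.
rewrite -ler_sqr ?nnegrE ?addr_ge0 ?enorm_ge0 // sqr_enorm.
rewrite !(dotDl, dotC _ (u + v)) (dotC v u) -!sqr_enorm.
by have := dot_le_enormM u v; nra.
Qed.

Lemma sqr_enormD3 u v w :
  enorm (u + v + w) ^+ 2 <= 3 * (enorm u ^+ 2 + enorm v ^+ 2 + enorm w ^+ 2).
Proof.
have uvw0 : 0 <= enorm u + enorm v + enorm w by rewrite !addr_ge0 ?enorm_ge0.
apply: (@le_trans _ _ ((enorm u + enorm v + enorm w) ^+ 2)).
  rewrite ler_sqr ?nnegrE ?enorm_ge0 //.
  by apply: le_trans (enormD _ _) _; rewrite lerD2r enormD.
move: (enorm u) (enorm v) (enorm w) => a b c; rewrite -subr_ge0.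
have -> : 3 * (a ^+ 2 + b ^+ 2 + c ^+ 2) - (a + b + c) ^+ 2
          = (a - b) ^+ 2 + (b - c) ^+ 2 + (a - c) ^+ 2 by ring.
by rewrite !addr_ge0 ?sqr_ge0.
Qed.

Lemma dot_inj u v : (forall w, dot w u = dot w v) -> u = v.
Proof.
by move=> uv; apply/eqP; rewrite -subr_eq0 -dotxx_eq0 dotBr uv subrr.
Qed.

End Euclidean.

Lemma sqr_leM_le (R : realFieldType) (a b : R) :
  0 <= b -> a ^+ 2 <= b * a -> a <= b.
Proof. by move=> b0 ab; nra. Qed.

Section Transpose.
Variables (R : realType) (n m : nat).

Lemma dot_mulmx (v : 'rV[R]_n) (A : 'M[R]_(n, m)) (w : 'rV[R]_m) :
  dot (v *m A) w = dot v (w *m A^T).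
Proof.
have dotE k (u u' : 'rV[R]_k) : dot u u' = (u *m u'^T) 0 0.
  by rewrite !mxE; apply: eq_bigr => i _; rewrite mxE.
by rewrite !dotE trmx_mul trmxK mulmxA.
Qed.

Lemma opnorm_le_trmx (A : 'M[R]_(n, m)) (b : R) : 0 <= b -> opnorm_le A b ->
  forall w : 'rV[R]_m, enorm (w *m A^T) <= b * enorm w.
Proof.
move=> b0 Ab w; apply: sqr_leM_le; first by rewrite mulr_ge0 ?enorm_ge0.
rewrite sqr_enorm -dot_mulmx dotC mulrAC.
apply: le_trans (dot_le_enormM _ _) _; rewrite mulrC.
by apply: ler_wpM2r; [exact: enorm_ge0 | exact: Ab].
Qed.

End Transpose.

Section MeanValue.
Variables (R : realType) (n m : nat) (c : 'rV[R]_n -> 'rV[R]_m).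

Let line_quotientE (d b : 'rV[R]_n) (t : R) :
  (fun h : R => h^-1 *: (((fun s : R => c (s *: d + b)) \o shift t) (h *: 1)
                         - c (t *: d + b)))
  = (fun h : R => h^-1 *: ((c \o shift (t *: d + b)) (h *: d) - c (t *: d + b))).
Proof.
by apply/funext => h /=; rewrite [_%:A]mulr1 scalerDl addrA.
Qed.

Lemma derivable_along_line (d b : 'rV[R]_n) (t : R) :
  derivable c (t *: d + b) d -> derivable (fun s : R => c (s *: d + b)) t 1.
Proof. by rewrite /derivable line_quotientE. Qed.

Lemma derive_along_line (d b : 'rV[R]_n) (t : R) :
  'D_1 (fun s : R => c (s *: d + b)) t = 'D_d c (t *: d + b).
Proof. by rewrite /derive line_quotientE. Qed.

Lemma jacobian_bound_lipschitz (J : 'rV[R]_n -> 'M[R]_(n, m)) (G : R) :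
  is_jacobian c J -> 0 <= G -> (forall y, opnorm_le (J y) G) ->
  forall a b, enorm (c a - c b) <= G * enorm (a - b).
Proof.
move=> hc G0 JG a b; set w := c a - c b; set d := a - b.
pose ct t := c (t *: d + b).
have dct t : derivable ct t 1.
  by apply/derivable_along_line/diff_derivable; case: (hc (t *: d + b)).
have Dct t : 'D_1 ct t = d *m J (t *: d + b).
  rewrite /ct derive_along_line deriveE; last by case: (hc (t *: d + b)).
  by case: (hc (t *: d + b)) => _ ->.
pose cti i t : R := ct t 0 i.
have dcti t i : derivable (cti i) t 1 by move: (dct t) => /derivable_mxP; apply.
have Dcti t i : 'D_1 (cti i) t = (d *m J (t *: d + b)) 0 i.
  by rewrite -Dct derive_mx // mxE.
pose phi := \sum_(i < m) (cti i * cst (w 0 i)).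
have phiE t : phi t = dot (ct t) w by rewrite /phi fct_sumE.
have dphi_i t i : derivable (cti i * cst (w 0 i)) t 1.
  by apply: derivableM => //; exact: derivable_cst.
have dphi t : derivable phi t 1 by apply: derivable_sum.
have Dphi t : 'D_1 phi t = dot (d *m J (t *: d + b)) w.
  rewrite derive_sum //; apply: eq_bigr => i _.
  rewrite (deriveM (dcti t i) (derivable_cst _ _ _)) derive_cst Dcti.
  by rewrite /GRing.scale /= mulr0 add0r mulrC.
have [xi _ mvt] : exists2 xi, xi \in `]0, 1[%R & phi 1 - phi 0 = 'D_1 phi xi * (1 - 0).
  apply: MVT; first exact: ltr01.
  - by move=> t _; apply: derivableP.
  - by apply: derivable_within_continuous => t _.
move: mvt; rewrite !phiE /ct scale1r scale0r add0r /d subrK -dotBl -/w.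
rewrite subr0 mulr1 Dphi => ww.
apply: sqr_leM_le; first by rewrite mulr_ge0 ?enorm_ge0.
rewrite sqr_enorm ww; apply: le_trans (dot_le_enormM _ _) _.
by apply: ler_wpM2r; [exact: enorm_ge0 | exact: JG].
Qed.

End MeanValue.

Section Penalty.
Variables (R : realType) (n m : nat).
Variables (f : 'rV[R]_n -> R) (gradf : 'rV[R]_n -> 'rV[R]_n).
Variables (c : 'rV[R]_n -> 'rV[R]_m) (J : 'rV[R]_n -> 'M[R]_(n, m)).

Lemma Qpen_gradientE r Q :
  is_gradient f gradf -> is_jacobian c J -> is_gradient (Qpen f c r) Q ->
  forall y, Q y = gradf y + r *: (c y *m (J y)^T).
Proof.
move=> hf hc hQ y; apply: dot_inj => v.
have [dQ eQ] := hQ y; have [df ef] := hf y; have [dc ec] := hc y.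
rewrite -eQ -deriveE //.
have dcv : derivable c y v by exact: diff_derivable.
pose ci i x : R := c x 0 i.
have dci i : derivable (ci i) y v by move: dcv => /derivable_mxP; apply.
have Dci i : 'D_v (ci i) y = (v *m J y) 0 i.
  by rewrite -ec -deriveE // derive_mx ?mxE.
have -> : Qpen f c r = f + (r / 2) \*: \sum_(i < m) (ci i * ci i).
  by apply/funext => x; rewrite /Qpen sqr_enorm /dot /= fct_sumE.
have dfv : derivable f y v by exact: diff_derivable.
have dci2 i : derivable (ci i * ci i) y v by apply: derivableM.
rewrite deriveD //; last by apply/derivableZ/derivable_sum.
rewrite deriveZ ?derive_sum //; last exact: derivable_sum.
rewrite deriveE // ef dotDr dotZr -dot_mulmx; congr (_ + _).
rewrite /dot [LHS]/GRing.scale /= !mulr_sumr; apply: eq_bigr => i _.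
by rewrite deriveM // !Dci /GRing.scale /= /ci; field.
Qed.

Lemma Qpen_gradient_lipschitz (Lf Lc G C r : R) Q :
  0 <= G -> 0 <= r -> 0 <= Lc ->
  smooth_fun f gradf Lf -> smooth_map c J Lc ->
  (forall y, opnorm_le (J y) G) -> (forall y, enorm (c y) <= C) ->
  is_gradient (Qpen f c r) Q ->
  forall a b, enorm (Q a - Q b) <= (Lf + r * (G ^+ 2 + C * Lc)) * enorm (a - b).
Proof.
move=> G0 r0 Lc0 [hf gradf_lip] [hc J_lip] JG cC hQ a b.
have d0 := enorm_ge0 (a - b).
have QE : Q a - Q b = (gradf a - gradf b)
    + r *: ((c a - c b) *m (J a)^T + c b *m (J a - J b)^T).
  rewrite !(Qpen_gradientE hf hc hQ) linearB /= mulmxBl mulmxBr addrA subrK.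
  by rewrite scalerBr opprD addrACA.
have Jc_le : enorm ((c a - c b) *m (J a)^T) <= G * (G * enorm (a - b)).
  apply: le_trans (opnorm_le_trmx G0 (JG a) _) _.
  exact/ler_wpM2l/(jacobian_bound_lipschitz hc).
have dJ_le : enorm (c b *m (J a - J b)^T) <= Lc * enorm (a - b) * C.
  apply: le_trans (opnorm_le_trmx _ (J_lip a b) _) _; first exact: mulr_ge0.
  by apply: ler_wpM2l; [exact: mulr_ge0 | exact: cC].
rewrite QE; apply: le_trans (enormD _ _) _.
rewrite enormZ ger0_norm // mulrDl; apply: lerD; first exact: gradf_lip.
rewrite -mulrA; apply: ler_wpM2l => //; apply: le_trans (enormD _ _) _.
by rewrite mulrDl expr2 -!mulrA [C * _]mulrC -mulrA; apply: lerD; rewrite // mulrA.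
Qed.

End Penalty.

Lemma Lrho_ge (R : realType) (Lf Lc G C rho0 r : R) :
  0 <= Lf -> 0 < rho0 <= r ->
  Lf + r * (G ^+ 2 + C * Lc) <= Lrho Lf Lc G C rho0 r.
Proof.
move=> Lf0 /andP[rho0_gt0 rho0_le].
have -> : Lrho Lf Lc G C rho0 r = r / rho0 * Lf + r * (G ^+ 2 + C * Lc).
  by rewrite /Lrho; ring.
rewrite lerD2r -[leLHS]mul1r; apply: ler_wpM2r => //.
by rewrite ler_pdivlMr // mul1r.
Qed.

Lemma sqr_enorm_residual_le (R : realType) (n : nat) (a e d : 'rV[R]_n)
    (L M X : R) :
  enorm a <= L * X ->
  enorm (a - e + M *: d) ^+ 2
    <= 3 * enorm e ^+ 2 + 3 * (L ^+ 2 + M ^+ 2) * (X ^+ 2 + enorm d ^+ 2).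
Proof.
move=> aX; apply: le_trans (sqr_enormD3 _ _ _) _.
have a2 : enorm a ^+ 2 <= L ^+ 2 * X ^+ 2.
  rewrite -exprMn ler_sqr ?nnegrE ?enorm_ge0 //.
  exact: le_trans (enorm_ge0 a) aX.
rewrite enormN enormZ exprMn real_normK ?num_real //.
have := mulr_ge0 (sqr_ge0 L) (sqr_ge0 (enorm d)).
have := mulr_ge0 (sqr_ge0 M) (sqr_ge0 X).
by move: a2 (enorm e ^+ 2) => a2 E2; nra.
Qed.

Theorem lemmaC3 (R : realType) (n m : nat)
  (f : 'rV[R]_n -> R) (gradf : 'rV[R]_n -> 'rV[R]_n) (Lf : R)
  (c : 'rV[R]_n -> 'rV[R]_m) (Jc : 'rV[R]_n -> 'M[R]_(n, m)) (Lc : R)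
  (h g : 'rV[R]_n -> R) (G C rho0 beta : R)
  (gradQ : R -> 'rV[R]_n -> 'rV[R]_n)
  (rho mu : nat -> R) (Gk x z p : nat -> 'rV[R]_n) :
  0 <= Lf -> 0 <= Lc -> 0 < G -> 0 < C ->
  smooth_fun f gradf Lf -> smooth_map c Jc Lc ->
  (forall y, enorm (gradf y) <= G) ->
  (forall y s, subgrad h y s -> enorm s <= G) ->
  (forall y s, subgrad g y s -> enorm s <= G) ->
  (forall y, opnorm_le (Jc y) G) ->
  (forall y, enorm (c y) <= C) ->
  convex_fun h -> convex_fun g ->
  (forall r, is_gradient (Qpen f c r) (gradQ r)) ->
  0 < rho0 -> (forall k, rho0 <= rho k) ->
  0 < beta -> (forall k, 0 < mu k) ->
  (* p k = prox_{mu_k g}(z^k) *)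
  (forall k, is_prox (mu k) g (z k) (p k)) ->
  (* x^{k+1} = prox_{mu_k h}(z^k - mu_k G^k) *)
  (forall k, is_prox (mu k) h (z k - mu k *: Gk k) (x k.+1)) ->
  (* z^{k+1} = z^k - beta (prox_{mu_k g}(z^k) - x^{k+1}) *)
  (forall k, z k.+1 = z k - beta *: (p k - x k.+1)) ->
  forall k : nat,
    let e := Gk k - gradQ (rho k) (x k) in
    let u := gradQ (rho k) (x k.+1) - Gk k + (mu k)^-1 *: (p k - x k.+1) in
    let dw2 := enorm (x k.+1 - x k) ^+ 2 + enorm (z k.+1 - z k) ^+ 2 in
    let L := Lrho Lf Lc G C rho0 (rho k) in
    enorm u ^+ 2 <= 3 * enorm e ^+ 2 + 3 * (L ^+ 2 + (mu k * beta)^-2) * dw2 /\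
    Num.max (enorm u ^+ 2) (enorm (x k.+1 - p k) ^+ 2)
      <= 3 * enorm e ^+ 2 + (3 * (L ^+ 2 + (mu k * beta)^-2) + beta^-2) * dw2.
Proof.
move=> Lf0 Lc0 G0 _ sf sc _ _ _ JG cC _ _ hQ rho0_gt0 rho0_le beta_gt0 _.
move=> _ _ zE k e u dw2 L.
have rho_gt0 : 0 < rho k := lt_le_trans rho0_gt0 (rho0_le k).
have gradQ_lip : enorm (gradQ (rho k) (x k.+1) - gradQ (rho k) (x k))
                 <= L * enorm (x k.+1 - x k).
  apply: le_trans (Qpen_gradient_lipschitz (ltW G0) (ltW rho_gt0) Lc0 sf sc JG cC
    (hQ (rho k)) _ _) _.
  by apply: ler_wpM2r; [exact: enorm_ge0 | rewrite Lrho_ge // rho0_gt0 rho0_le].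
have pxE : p k - x k.+1 = - beta^-1 *: (z k.+1 - z k).
  rewrite zE addrAC subrr add0r scaleNr scalerN opprK scalerA.
  by rewrite mulVf ?gt_eqF ?scale1r.
have u_le : enorm u ^+ 2 <= 3 * enorm e ^+ 2 + 3 * (L ^+ 2 + (mu k * beta)^-2) * dw2.
  have -> : u = gradQ (rho k) (x k.+1) - gradQ (rho k) (x k) - e
                + (- (mu k * beta)^-1) *: (z k.+1 - z k).
    by rewrite /u /e pxE scalerA mulrN invfM mulrC opprB addrA subrK.
  by apply: le_trans (sqr_enorm_residual_le _ _ _ gradQ_lip) _; rewrite sqrrN exprVn.
have xp_le : enorm (x k.+1 - p k) ^+ 2 <= beta^-2 * dw2.
  rewrite enorm_distC pxE enormZ normrN exprMn real_normK ?num_real // exprVn.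
  by apply: ler_wpM2l; [rewrite invr_ge0 sqr_ge0 | rewrite lerDr sqr_ge0].
have dw2_ge0 : 0 <= dw2 by rewrite addr_ge0 ?sqr_ge0.
have A_ge0 : 0 <= 3 * (L ^+ 2 + (mu k * beta)^-2).
  by rewrite mulr_ge0 ?addr_ge0 ?invr_ge0 ?sqr_ge0.
split => //; rewrite ge_max; apply/andP; split.
- apply: le_trans u_le _; rewrite lerD2l; apply: ler_wpM2r => //.
  by rewrite lerDl invr_ge0 sqr_ge0.
- apply: le_trans xp_le _; rewrite mulrDl.
  have := mulr_ge0 A_ge0 dw2_ge0; have := sqr_ge0 (enorm e); lra.
Qed.
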